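(* Let $\mathbf{f}:\mathbb{R}^n\times\mathbb{R}^+\to\mathbb{R}^n$ be continuously differentiable in its first argument and $\sigma:\mathbb{R}^n\times\mathbb{R}^+\to\mathbb{R}^{n\times d}$, and assume the Lipschitz condition $\|\mathbf{f}(\mathbf{a},t)-\mathbf{f}(\mathbf{b},t)\|+\|\sigma(\mathbf{a},t)-\sigma(\mathbf{b},t)\|\le K_1\|\mathbf{a}-\mathbf{b}\|$ and the growth condition $\|\mathbf{f}(\mathbf{a},t)\|^2+\|\sigma(\mathbf{a},t)\|^2\le K_2(1+\|\mathbf{a}\|^2)$ for all $t\ge0$, $\mathbf{a},\mathbf{b}\in\mathbb{R}^n$, for some constants $K_1,K_2>0$. Assume: (H1) there is $\lambda>0$ such that for all $\mathbf{a},t$, the largest eigenvalue of the symmetric part of the Jacobian $\frac{\partial \mathbf{f}}{\partial \mathbf{a}}(\mathbf{a},t)$ is at most $-\lambda$; (H2) there is a constant $C$ such that for all $\mathbf{a},t$, $\mathrm{tr}(\sigma(\mathbf{a},t)^T\sigma(\mathbf{a},t))\le C$. Consider the augmented process $\mathbf{x}=(\mathbf{a},\mathbf{b})\in\mathbb{R}^{2n}$ satisfying the Itô equation $d\mathbf{x}=\begin{pmatrix}\mathbf{f}(\mathbf{a},t)\\ \mathbf{f}(\mathbf{b},t)\end{pmatrix}dt+\begin{pmatrix}\sigma(\mathbf{a},t)&0\\0&\sigma(\mathbf{b},t)\end{pmatrix}\begin{pmatrix}dW_1^d\\ dW_2^d\end{pmatrix}$, where $W_1^d,W_2^d$ are independent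 standard $d$-dimensional Wiener processes, and let $V(\mathbf{x})=\|\mathbf{a}-\mathbf{b}\|^2$. Then for every $\mathbf{x}$ (and every $t$), $\widetilde{A}V(\mathbf{x})\le -2\lambda V(\mathbf{x})+2C$, where $\widetilde{A}$ is the infinitesimal operator of the process $\mathbf{x}(t)$.
   Context: For the Itô process $d\mathbf{x}=\hat{\mathbf{f}}(\mathbf{x},t)dt+\hat\sigma(\mathbf{x},t)dW$ the infinitesimal operator $\widetilde A$ coincides with the differential generator $\mathscr{L}V=\frac{\partial V}{\partial t}+\frac{\partial V}{\partial\mathbf{x}}\hat{\mathbf{f}}(\mathbf{x},t)+\frac12\mathrm{tr}\big(\hat\sigma(\mathbf{x},t)^T\frac{\partial^2V}{\partial\mathbf{x}^2}\hat\sigma(\mathbf{x},t)\big)$. *)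

From HB Require Import structures.
From mathcomp Require Import all_boot all_order all_algebra.
From mathcomp Require Import all_classical all_reals all_analysis.
Set Implicit Arguments. Unset Strict Implicit. Unset Printing Implicit Defensive.
Import Order.TTheory GRing.Theory Num.Theory.
Import numFieldNormedType.Exports.
Local Open Scope ring_scope.

Section Defs.
Variable R : realType.

Definition enorm (m : nat) (v : 'rV[R]_m) : R := Num.sqrt (\sum_i v 0 i ^+ 2).

Definition fnorm (m d : nat) (A : 'M[R]_(m, d)) : R := Num.sqrt (\tr (A^T *m A)).

Definition ebase (m : nat) (i : 'I_m) : 'rV[R]_m := delta_mx 0 i.

Definition pder (m : nat) (V : 'rV[R]_m -> R) (i : 'I_m) (x : 'rV[R]_m) : R :=
  'D_(ebase i) V x.

Definition hessian (m : nat) (V : 'rV[R]_m -> R) (x : 'rV[R]_m) : 'M[R]_m :=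
  \matrix_(i, j) pder (pder V j) i x.

(* Jacobian: we use MathComp-Analysis' derive.jacobian (= lin1_mx ('d F a),
   i.e. the transpose of the textbook Jacobian; its symmetric part is the same). *)

(* Differential generator of the Ito process dx = fh(x,t) dt + sh(x,t) dW:
   LV = dV/dt + (dV/dx) fh + 1/2 tr(sh^T (d^2V/dx^2) sh). *)
Definition generator (m d : nat) (fh : 'rV[R]_m -> R -> 'rV[R]_m)
  (sh : 'rV[R]_m -> R -> 'M[R]_(m, d)) (V : 'rV[R]_m -> R -> R)
  (x : 'rV[R]_m) (t : R) : R :=
  derive1 (fun s => V x s) t
  + \sum_i pder (fun y => V y t) i x * fh x t 0 i
  + 2^-1 * \tr ((sh x t)^T *m hessian (fun y => V y t) x *m sh x t).

Definition aug_drift (n : nat) (f : 'rV[R]_n -> R -> 'rV[R]_n)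
  (x : 'rV[R]_(n + n)) (t : R) : 'rV[R]_(n + n) :=
  row_mx (f (lsubmx x) t) (f (rsubmx x) t).

Definition aug_diff (n d : nat) (sigma : 'rV[R]_n -> R -> 'M[R]_(n, d))
  (x : 'rV[R]_(n + n)) (t : R) : 'M[R]_(n + n, d + d) :=
  block_mx (sigma (lsubmx x) t) 0 0 (sigma (rsubmx x) t).

Definition Vdist (n : nat) (x : 'rV[R]_(n + n)) (t : R) : R :=
  \sum_i (lsubmx x - rsubmx x) 0 i ^+ 2.

End Defs.

From HB Require Import structures.
From mathcomp Require Import all_boot all_order all_algebra.
From mathcomp Require Import all_classical all_reals all_analysis.
From mathcomp Require Import ring lra.
Set Implicit Arguments. Unset Strict Implicit. Unset Printing Implicit Defensive.
Import Order.TTheory GRing.Theory Num.Theory.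
Import numFieldNormedType.Exports.
Local Open Scope classical_set_scope.
Local Open Scope ring_scope.

(* With D = [I; -I] we have V(x) = |x D|^2, a quadratic form whose gradient
   and Hessian are explicit, so the generator equals
   2 (a - b).(f a - f b) + tr(sigma_a^T sigma_a) + tr(sigma_b^T sigma_b).
   The mean value theorem along the segment from b to a writes the first term
   as the quadratic form in a - b of the symmetric part of the Jacobian at some
   point, and the Rayleigh principle (the maximum of a symmetric form on the
   unit sphere is an eigenvalue) bounds it by -lambda |a - b|^2; (H2) bounds
   each trace by C. *)

Section QuadraticForm.
Variables (R : comRingType) (n : nat).
Implicit Types (S : 'M[R]_n) (v w : 'rV[R]_n).

Definition qform S v : R := (v *m S *m v^T) 0 0.

Lemma mx11_trmx (A : 'M[R]_1) : A^T = A.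
Proof. by apply/matrixP => i j; rewrite !ord1 mxE. Qed.

Lemma qformDZ S v w h :
  qform S (v + h *: w) =
  qform S v + h * (v *m (S + S^T) *m w^T) 0 0 + h ^+ 2 * qform S w.
Proof.
rewrite /qform linearD /= linearZ /= !(mulmxDl, mulmxDr) -!scalemxAl -!scalemxAr.
have -> : w *m S *m v^T = v *m S^T *m w^T.
  by rewrite -[LHS]mx11_trmx !trmx_mul trmxK mulmxA.
move: (v *m S *m v^T) (v *m S *m w^T) (v *m S^T *m w^T) (w *m S *m w^T) => A B C D.
rewrite !mxE; ring.
Qed.

Lemma qform_trmx S v : qform S^T v = qform S v.
Proof. by rewrite /qform -[v *m S^T *m v^T]mx11_trmx !trmx_mul !trmxK mulmxA. Qed.

Lemma qformZ S v h : qform S (h *: v) = h ^+ 2 * qform S v.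
Proof.
by have := qformDZ S 0 v h; rewrite add0r /qform !mul0mx !mxE mulr0 !add0r.
Qed.

Lemma qform_delta S i : qform S (delta_mx 0 i) = S i i.
Proof. by rewrite /qform -rowE trmx_delta -colE !mxE. Qed.

End QuadraticForm.

Section RealQuadraticForm.
Variables (R : realFieldType) (n : nat).
Implicit Types (S : 'M[R]_n) (v w : 'rV[R]_n).

Lemma qform1E v : qform 1%:M v = \sum_i v 0 i ^+ 2.
Proof. by rewrite /qform mulmx1 mxE; apply: eq_bigr => i _; rewrite mxE expr2. Qed.

Lemma qform1_ge0 v : 0 <= qform 1%:M v.
Proof. by rewrite qform1E sumr_ge0 // => i _; rewrite sqr_ge0. Qed.

Lemma qform1_eq0 v : qform 1%:M v = 0 -> v = 0.
Proof.
rewrite qform1E => /psumr_eq0P vi0; apply/rowP => j; rewrite mxE.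
by apply/eqP; rewrite -sqrf_eq0 vi0 // => i _; rewrite sqr_ge0.
Qed.

Lemma sqr_coord_le_qform1 v j : v 0 j ^+ 2 <= qform 1%:M v.
Proof.
by rewrite qform1E (bigD1 j) //= lerDl sumr_ge0 // => i _; rewrite sqr_ge0.
Qed.

Lemma quadratic_le0_linear_coef0 (a k : R) :
  (forall h, h * a + h ^+ 2 * k <= 0) -> a = 0.
Proof.
(* At h = a t, since t |k| = 1 - t, we get h a + h^2 k >= t h a = (a t)^2. *)
move=> le0; pose t := (1 + `|k|)^-1.
have t_gt0 : 0 < t by rewrite invr_gt0 ltr_pwDl.
have tE : t * (1 + `|k|) = 1 by rewrite mulVf // gt_eqF // ltr_pwDl.
have le0t := le0 (a * t).
have : (a * t) ^+ 2 <= a * t * a + (a * t) ^+ 2 * k.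
  have -> : a * t * a = (a * t) ^+ 2 * (1 + `|k|).
    by rewrite -[X in X = _]mulr1 -{1}tE; ring.
  rewrite -subr_ge0 (_ : _ - _ = (a * t) ^+ 2 * (`|k| + k)); last by ring.
  by rewrite mulr_ge0 ?sqr_ge0 // -lerBlDr sub0r ler_normr lexx orbT.
move=> /le_trans /(_ le0t) at2_le0.
have : (a * t) ^+ 2 == 0 by rewrite eq_le at2_le0 sqr_ge0.
by rewrite sqrf_eq0 mulf_eq0 (gt_eqF t_gt0) orbF => /eqP.
Qed.

Lemma nsd_qform_eq0_mulmx S v : S^T = S ->
  (forall w, qform S w <= 0) -> qform S v = 0 -> v *m S = 0.
Proof.
move=> S_sym S_nsd Sv0; apply/rowP => j; rewrite [RHS]mxE.
suff : 2 * (v *m S) 0 j = 0 by move/eqP; rewrite mulf_eq0 pnatr_eq0 /= => /eqP.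
apply: (@quadratic_le0_linear_coef0 _ (S j j)) => h.
have := S_nsd (v + h *: delta_mx 0 j).
rewrite qformDZ Sv0 add0r qform_delta S_sym trmx_delta -colE mulmxDr.
by move: (v *m S) => A; rewrite !mxE mulr_natl mulr2n.
Qed.

Lemma qform_sym_part S v : qform (2^-1 *: (S + S^T)) v = qform S v.
Proof.
have -> : qform (2^-1 *: (S + S^T)) v = 2^-1 * (qform S v + qform S^T v).
  rewrite /qform -scalemxAr -scalemxAl mulmxDr mulmxDl.
  by move: (v *m S *m v^T) (v *m S^T *m v^T) => A B; rewrite !mxE.
by rewrite qform_trmx; field.
Qed.

Lemma qform_subr_scalar S m w :
  qform (S - m%:M) w = qform S w - m * qform 1%:M w.
Proof.
rewrite /qform mulmxBr mulmxBl mul_mx_scalar -scalemxAl !mulmx1.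
by move: (w *m S *m w^T) (w *m w^T) => A B; rewrite !mxE.
Qed.

Lemma qform_maximizer_eigenvector S m v : S^T = S ->
  (forall w, qform S w <= m * qform 1%:M w) -> qform S v = m * qform 1%:M v ->
  v *m S = m *: v.
Proof.
move=> S_sym S_le Sv; apply/eqP; rewrite -subr_eq0 -mul_mx_scalar -mulmxBr.
apply/eqP/nsd_qform_eq0_mulmx.
- by rewrite linearB /= S_sym tr_scalar_mx.
- by move=> w; rewrite qform_subr_scalar subr_le0.
- by rewrite qform_subr_scalar Sv subrr.
Qed.

End RealQuadraticForm.

Section Rayleigh.
Variables (R : realType) (n : nat).
Implicit Types (S : 'M[R]_n) (v w : 'rV[R]_n).

Lemma continuous_qform S : continuous (qform S).
Proof.
have -> : qform S = fun v => \sum_j \sum_i v 0 i * S i j * v 0 j.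
  apply/funext => v; rewrite /qform mxE; apply: eq_bigr => j _.
  by rewrite !mxE mulr_suml.
apply: continuous_big => [|j _]; first exact: add_continuous.
apply: continuous_big => [|i _]; first exact: add_continuous.
move=> v; apply: (@continuousM _ _ (fun v => v 0 i * S i j) (fun v => v 0 j)).
  exact/continuousZr_tmp/coord_continuous.
exact: coord_continuous.
Qed.

Lemma compact_unit_sphere : compact [set v : 'rV[R]_n | qform 1%:M v = 1].
Proof.
apply: (subclosed_compact _ (rV_compact (fun=> @segment_compact R (-1) 1))).
  rewrite -[X in closed X]/(qform 1%:M @^-1` [set 1]).
  apply: preimage_closed; last exact: closed_eq.
  by move=> v _; exact: continuous_qform.
move=> v v1 i; rewrite /= in_itv /= -ler_norml.
rewrite -(expr_le1 (n := 2) _ (normr_ge0 _)) //.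
by rewrite real_normK ?num_real // -v1 sqr_coord_le_qform1.
Qed.

Lemma qform_le_unit_sphere_max S : (0 < n)%N ->
  exists2 v, qform 1%:M v = 1 & forall w, qform S w <= qform S v * qform 1%:M w.
Proof.
move=> n_gt0; set sphere := [set v : 'rV[R]_n | qform 1%:M v = 1].
have sphere_neq0 : sphere !=set0.
  by exists (delta_mx 0 (Ordinal n_gt0)); rewrite /sphere /= qform_delta mxE.
have qS_cont : {within sphere, continuous (qform S)}.
  by apply: continuous_subspaceT => x; exact: continuous_qform.
have [v /[!inE] v1 v_max] :=
  compact_EVT_max sphere_neq0 compact_unit_sphere qS_cont.
exists v => // w; have [w0|w_neq0] := eqVneq (qform 1%:M w) 0.
  by rewrite w0 (qform1_eq0 w0) /qform !mul0mx mxE mulr0.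
pose r := Num.sqrt (qform 1%:M w).
have r_gt0 : 0 < r by rewrite sqrtr_gt0 lt_def w_neq0 qform1_ge0.
have r2 : r ^+ 2 = qform 1%:M w by rewrite sqr_sqrtr // qform1_ge0.
have rw_sphere : r^-1 *: w \in sphere.
  by rewrite inE /sphere /= qformZ exprVn r2 mulVf.
have := v_max _ rw_sphere; rewrite qformZ exprVn r2 -r2.
by rewrite ler_pdivrMl ?exprn_gt0 // mulrC.
Qed.

Lemma qform_le_eigenvalue_bound S c : S^T = S ->
  (forall mu, eigenvalue S mu -> mu <= c) ->
  forall v, qform S v <= c * qform 1%:M v.
Proof.
move=> S_sym S_eig v; have [n0|n_gt0] := posnP n.
  have -> : v = 0 by apply/rowP => -[i lt_in]; exfalso; move: lt_in; rewrite n0.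
  by rewrite /qform !mul0mx mxE mulr0.
have [u u1 u_max] := qform_le_unit_sphere_max S n_gt0.
have u_eig : eigenvalue S (qform S u).
  apply/eigenvalueP; exists u.
    by apply: qform_maximizer_eigenvector => //; rewrite u1 mulr1.
  by apply: contra_eq_neq u1 => ->; rewrite /qform !mul0mx mxE eq_sym oner_eq0.
by apply: le_trans (u_max v) _; rewrite ler_wpM2r ?qform1_ge0 ?S_eig.
Qed.

End Rayleigh.

Section QuadraticFormDerivatives.
Variable R : realType.

Lemma derive_along_quadratic (V : normedModType R) (F : V -> R) a v P Q :
  (forall h : R, h != 0 -> F (h *: v + a) = F a + h * P + h ^+ 2 * Q) ->
  'D_v F a = P.
Proof.
move=> F_quad; apply: cvg_lim => //.
have quotE : \forall h \near 0^', P + h * Q = h^-1 *: (F (h *: v + a) - F a).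
  near=> h; have h_neq0 : h != 0 by near: h; exact: nbhs_dnbhs_neq.
  by rewrite F_quad //; apply/esym; rewrite /GRing.scale /=; field.
apply: cvg_trans (near_eq_cvg quotE) _.
have h_to0 : (fun h : R => h) @ 0^' --> (0 : R) by apply: cvg_within; exact: cvg_id.
have := cvgD (cvg_cst P) (cvgMr_tmp (b := Q) h_to0); rewrite mul0r addr0; exact.
Unshelve. all: by end_near.
Qed.

Variable n : nat.
Implicit Types (S : 'M[R]_n) (a u v : 'rV[R]_n).

Lemma derive_qform S a v : 'D_v (qform S) a = (a *m (S + S^T) *m v^T) 0 0.
Proof.
by apply: (derive_along_quadratic (Q := qform S v)) => h _; rewrite addrC qformDZ.
Qed.

Lemma pder_qform S k a : pder (qform S) k a = (a *m (S + S^T)) 0 k.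
Proof. by rewrite /pder derive_qform /ebase trmx_delta -colE mxE. Qed.

Lemma sum_pder_qform S a u :
  \sum_i pder (qform S) i a * u 0 i = (a *m (S + S^T) *m u^T) 0 0.
Proof.
by rewrite [RHS]mxE; apply: eq_bigr => i _; rewrite pder_qform [u^T _ _]mxE.
Qed.

Lemma hessian_qform S a : hessian (qform S) a = S + S^T.
Proof.
apply/matrixP => i j; rewrite mxE.
have -> : pder (qform S) j = fun y => (y *m (S + S^T)) 0 j.
  by apply/funext => y; exact: pder_qform.
apply: (derive_along_quadratic (Q := 0)) => h _.
rewrite mulmxDl -scalemxAl /ebase -rowE.
by move: (a *m _) => B; rewrite !mxE mulr0 addr0 addrC.
Qed.

End QuadraticFormDerivatives.

Section OneSidedLipschitz.
Variables (R : realType) (n : nat).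

Lemma is_derive_along_line m (F : 'rV[R]_n -> 'rV[R]_m) (u b : 'rV[R]_n)
    (s : R) :
  differentiable F (s *: u + b) ->
  is_derive s 1 (fun s : R => F (s *: u + b)) (u *m jacobian F (s *: u + b)).
Proof.
move=> dF.
have quotE :
    (fun h : R => h^-1 *: (F ((h *: 1 + s) *: u + b) - F (s *: u + b))) =
    (fun h : R => h^-1 *: (F (h *: u + (s *: u + b)) - F (s *: u + b))).
  by apply/funext => h; rewrite -[h *: 1]/(h * 1) mulr1 scalerDl addrA.
apply: DeriveDef.
  by rewrite /derivable /= [X in cvg (X @ _)]quotE; exact: diff_derivable.
by rewrite -deriveEjacobian // /derive /= [X in lim (X @ _)]quotE.
Qed.

Lemma is_derive_mxdot (G : R -> 'rV[R]_n) (u dG : 'rV[R]_n) (s : R) :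
  is_derive s 1 G dG ->
  is_derive s 1 (fun s => (u *m (G s)^T) 0 0) ((u *m dG^T) 0 0).
Proof.
move=> G_der; have G_dv : derivable G s 1 by case: G_der.
have coord_der i : is_derive s 1 (fun s => G s 0 i) (dG 0 i).
  apply: DeriveDef; first by move/derivable_mxP: G_dv; apply.
  by have := derive_mx G_dv; rewrite derive_val => ->; rewrite mxE.
have -> : (fun s => (u *m (G s)^T) 0 0) =
           \sum_i (u 0 i \*: (fun s => G s 0 i)).
  apply/funext => x; rewrite mxE fct_sumE.
  by apply: eq_bigr => i _; rewrite !mxE.
have -> : (u *m dG^T) 0 0 = \sum_i u 0 i *: dG 0 i.
  by rewrite mxE; apply: eq_bigr => i _; rewrite !mxE.
by apply: is_derive_sum => i; apply: is_deriveZ.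
Qed.

Lemma mxdot_sub_le_sym_jacobian_bound (F : 'rV[R]_n -> 'rV[R]_n) c a b :
  (forall y, differentiable F y) ->
  (forall y mu,
     eigenvalue (2^-1 *: (jacobian F y + (jacobian F y)^T)) mu -> mu <= c) ->
  ((a - b) *m (F a - F b)^T) 0 0 <= c * qform 1%:M (a - b).
Proof.
move=> F_diff J_eig; set u := a - b.
pose g s := (u *m (F (s *: u + b))^T) 0 0.
have g_der (s : R) : is_derive s 1 g (qform (jacobian F (s *: u + b)) u).
  rewrite -qform_trmx /qform -mulmxA -trmx_mul.
  exact/is_derive_mxdot/is_derive_along_line.
have g_cont : {within `[0, 1], continuous g}.
  by apply: derivable_within_continuous => s _; case: (g_der s).
have [s _ gE] := MVT_segment ler01 (fun s _ => g_der s) g_cont.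
have -> : (u *m (F a - F b)^T) 0 0 = g 1 - g 0.
  rewrite /g scale1r scale0r add0r /u subrK linearB /= mulmxBr.
  by move: (_ *m (F a)^T) (_ *m (F b)^T) => A B; rewrite !mxE.
rewrite gE subr0 mulr1 -qform_sym_part.
apply: qform_le_eigenvalue_bound; last exact: J_eig.
by rewrite linearZ /= linearD /= trmxK addrC.
Qed.

End OneSidedLipschitz.

Section AugmentedProcess.
Variables (R : realType) (n : nat).

Definition lrdiff_mx : 'M[R]_(n + n, n) := col_mx 1%:M (- 1%:M).

Lemma mul_lrdiff_mx (x : 'rV[R]_(n + n)) :
  x *m lrdiff_mx = lsubmx x - rsubmx x.
Proof. by rewrite -{1}(hsubmxK x) mul_row_col mulmx1 mulmxN mulmx1. Qed.

Lemma qform_mulmx_trmx m (A : 'M[R]_(m, n)) (y : 'rV[R]_m) :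
  qform (A *m A^T) y = qform 1%:M (y *m A).
Proof. by rewrite /qform mulmx1 trmx_mul !mulmxA. Qed.

Lemma Vdist_qform t :
  (fun y => @Vdist R n y t) = qform (lrdiff_mx *m lrdiff_mx^T).
Proof.
apply/funext => y; rewrite qform_mulmx_trmx mul_lrdiff_mx qform1E.
by apply: eq_bigr => i _; rewrite mxE.
Qed.

Lemma mxtrace_lrdiff_block d (A B : 'M[R]_(n, d)) :
  \tr ((block_mx A 0 0 B)^T *m (lrdiff_mx *m lrdiff_mx^T) *m block_mx A 0 0 B) =
  \tr (A^T *m A) + \tr (B^T *m B).
Proof.
have DtE : lrdiff_mx^T *m block_mx A 0 0 B = row_mx A (- B).
  rewrite tr_col_mx linearN /= trmx1 mul_row_block.
  by rewrite !mul1mx !mulmx0 !mulNmx !mul1mx ?oppr0 ?addr0 ?add0r.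
rewrite mulmxA -mulmxA -[_^T *m lrdiff_mx](trmxK) trmx_mul trmxK DtE.
rewrite mxtrace_mulC tr_row_mx mul_row_col mxtraceD linearN /= mulNmx mulmxN.
by rewrite opprK !(mxtrace_mulC _ (_^T)).
Qed.

Lemma generator_Vdist d (f : 'rV[R]_n -> R -> 'rV[R]_n)
    (sigma : 'rV[R]_n -> R -> 'M[R]_(n, d)) x t :
  let a := lsubmx x in let b := rsubmx x in
  generator (aug_drift f) (aug_diff sigma) (@Vdist R n) x t =
  2 * ((a - b) *m (f a t - f b t)^T) 0 0
  + \tr ((sigma a t)^T *m sigma a t) + \tr ((sigma b t)^T *m sigma b t).
Proof.
move=> a b; set P := lrdiff_mx *m lrdiff_mx^T.
have P_sym : P^T = P by rewrite trmx_mul trmxK.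
rewrite /generator (_ : derive1 _ t = 0); last first.
  by rewrite -[fun s => _]/(cst (Vdist x 0)) derive1_cst.
rewrite Vdist_qform sum_pder_qform hessian_qform -/P P_sym add0r.
rewrite -mulr2n -scaler_nat -!scalemxAr -!scalemxAl mxtraceZ.
rewrite mulKf ?pnatr_eq0 //.
rewrite /aug_diff mxtrace_lrdiff_block addrA mxE /P mulmxA mul_lrdiff_mx.
by rewrite -mulmxA -trmx_mul mul_lrdiff_mx /aug_drift row_mxKl row_mxKr.
Qed.

End AugmentedProcess.

Theorem lemma1 (R : realType) (n d : nat)
  (f : 'rV[R]_n -> R -> 'rV[R]_n) (sigma : 'rV[R]_n -> R -> 'M[R]_(n, d))
  (K1 K2 lambda C : R) :
  (* f continuously differentiable in its first argument *)
  (forall t, 0 <= t -> forall a, differentiable (fun y => f y t) a) ->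
  (forall t, 0 <= t -> forall i j,
      continuous (fun a => jacobian (fun y => f y t) a i j)) ->
  0 < K1 -> 0 < K2 ->
  (* Lipschitz condition *)
  (forall t a b, 0 <= t ->
     enorm (f a t - f b t) + fnorm (sigma a t - sigma b t) <= K1 * enorm (a - b)) ->
  (* growth condition *)
  (forall t a, 0 <= t ->
     enorm (f a t) ^+ 2 + fnorm (sigma a t) ^+ 2 <= K2 * (1 + enorm a ^+ 2)) ->
  (* (H1): every (hence the largest) eigenvalue of the symmetric part of the
     Jacobian is at most -lambda *)
  0 < lambda ->
  (forall t a mu, 0 <= t ->
     eigenvalue (2^-1 *: (jacobian (fun y => f y t) a
                          + (jacobian (fun y => f y t) a)^T)) mu ->
     mu <= - lambda) ->
  (* (H2) *)
  (forall t a, 0 <= t -> \tr ((sigma a t)^T *m sigma a t) <= C) ->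
  forall (x : 'rV[R]_(n + n)) (t : R), 0 <= t ->
    generator (aug_drift f) (aug_diff sigma) (@Vdist R n) x t
      <= - (2 * lambda) * Vdist x t + 2 * C.
Proof.
(* Lipschitz continuity, linear growth and continuity of the Jacobian only serve
   to make the augmented process well defined; the generator bound needs none. *)
move=> f_diff _ _ _ _ _ _ J_eig trace_le x t t_ge0.
rewrite generator_Vdist.
have drift_le := mxdot_sub_le_sym_jacobian_bound (lsubmx x) (rsubmx x)
  (f_diff t t_ge0) (fun y mu => J_eig t y mu t_ge0).
have -> : Vdist x t = qform 1%:M (lsubmx x - rsubmx x).
  rewrite -[Vdist x t]/((fun y => Vdist y t) x) Vdist_qform.
  by rewrite qform_mulmx_trmx mul_lrdiff_mx.
have := trace_le t (lsubmx x) t_ge0; have := trace_le t (rsubmx x) t_ge0.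
lra.
Qed.
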